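(* Let $X$ be a $\delta$-hyperbolic proper geodesic metric space, $\xi\in\partial X$, $p\in X$ and $0<\epsilon\le\min\{\epsilon_0,\epsilon_1\}$. Then: (1) the identity map $(\partial X\setminus\{\xi\},d_{\xi,p,\epsilon})\to(\partial X\setminus\{\xi\},(d_{p,\epsilon})_\xi)$ is $L$-bilipschitz, where $L$ depends only on $\delta$; (2) if $\xi$ is not an isolated point of $\partial X$ and $\eta\in\partial X\setminus\{\xi\}$, then the bijection $f:(\partial X,d_{p,\epsilon})\to(S_\eta(\partial X\setminus\{\xi\}),\widehat{(d_{\xi,p,\epsilon})}_\eta)$ which is the identity on $\partial X\setminus\{\xi\}$ and sends $\xi$ to $\infty$ is bilipschitz.
   Context: $X$ is a proper geodesic Gromov $\delta$-hyperbolic space with Gromov boundary $\partial X$. Gromov product of $\xi,\eta\in\partial X$ at $p$: $(\xi|\eta)_p=\frac12\sup\liminf_{i,j}(d(p,x_i)+d(p,y_j)-d(x_i,y_j))$ over sequences $x_i\to\xi$, $y_j\to\eta$. There is $\epsilon_1>0$ depending only on $\delta$ such that for $0<\epsilon\le\epsilon_1$ there exists a metric $d_{p,\epsilon}$ on $\partial X$ (a visual metric; any such metric is meant) with $\frac12e^{-\epsilon(\eta_1|\eta_2)_p}\le d_{p,\epsilon}(\eta_1,\eta_2)\le e^{-\epsilon(\eta_1|\eta_2)_p}$. Busemann function: for a ray $\gamma$ from $p$ to $\xi$, $B_\gamma(x)=\lim_{t\to\infty}(d(\gamma(t),x)-t)$, and $B_{\xi,p}=\sup_\gamma B_\gamma$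 over rays from $p$ to $\xi$. For distinct $\eta_1,\eta_2\in\partial X\setminus\{\xi\}$, $H_{\xi,p}(\eta_1,\eta_2)=\inf_\sigma\inf_{x\in\sigma}B_{\xi,p}(x)$ over complete geodesics $\sigma$ from $\eta_1$ to $\eta_2$, and $D_{\xi,p,\epsilon}(\eta_1,\eta_2)=e^{-\epsilon H_{\xi,p}(\eta_1,\eta_2)}$. There is $\epsilon_0>0$ depending only on $\delta$ such that for $0<\epsilon\le\epsilon_0$ there is a metric $d_{\xi,p,\epsilon}$ on $\partial X\setminus\{\xi\}$ with $\frac12D_{\xi,p,\epsilon}\le d_{\xi,p,\epsilon}\le D_{\xi,p,\epsilon}$ (a parabolic visual metric; any such metric is meant). Metric inversion: for a metric space $(Z,d)$ and $q\in Z$, $d_q$ denotes a metric on $Z\setminus\{q\}$ with $\frac{d(x,y)}{4d(x,q)d(y,q)}\le d_q(x,y)\le\frac{d(x,y)}{d(x,q)d(y,q)}$ (such a metric exists). Sphericalization: for an unbounded metric space $(Z,d)$ and $q\in Z$, $S_q(Z)=Z\cup\{\infty\}$ and $\widehat d_q$ is a metric on $S_q(Z)$ with $\frac14s_q\le\widehat d_q\le s_q$, where $s_q(x,y)=\frac{d(x,y)}{(1+d(x,q))(1+d(y,q))}$ for $x,y\in Z$, $s_q(x,\infty)=\frac1{1+d(x,q)}$, $s_q(\infty,\infty)=0$ (such a metric exists). *)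

From HB Require Import structures.
From mathcomp Require Import all_boot all_order all_algebra.
From mathcomp Require Import all_classical all_reals.
From mathcomp Require Import ereal topology normedtype sequences exp.

Set Implicit Arguments.
Unset Strict Implicit.
Unset Printing Implicit Defensive.
Import Order.TTheory GRing.Theory Num.Theory.
Import numFieldNormedType.Exports.
Local Open Scope classical_set_scope.
Local Open Scope ring_scope.

Section Hyperbolic.
Variable R : realType.

Definition is_metric (T : Type) (d : T -> T -> R) : Prop :=
  (forall x y, 0 <= d x y) /\
  (forall x y, d x y = 0 <-> x = y) /\
  (forall x y, d x y = d y x) /\
  (forall x y z, d x z <= d x y + d y z).

Variable X : Type.
Variable d : X -> X -> R.

(* proper: closed balls are compact; for metric spaces compactness of a
   closed ball is written out as sequential compactness *)
Definition proper_space : Prop :=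
  forall (x0 : X) (r : R) (u : nat -> X),
    (forall n, d x0 (u n) <= r) ->
    exists (phi : nat -> nat) (l : X),
      (forall n, (phi n < phi n.+1)%N) /\
      (forall e : R, 0 < e -> exists N : nat, forall n, (N <= n)%N ->
          d (u (phi n)) l < e).

Definition geodesic_space : Prop :=
  forall x y : X, exists g : R -> X,
    g 0 = x /\ g (d x y) = y /\
    (forall s t, 0 <= s <= d x y -> 0 <= t <= d x y ->
       d (g s) (g t) = `|s - t|).

Definition gprod (w x y : X) : R := (d w x + d w y - d x y) / 2.

Definition hyperbolic (delta : R) : Prop :=
  forall w x y z : X, Num.min (gprod w x y) (gprod w y z) - delta <= gprod w x z.

Definition proper_geodesic_hyperbolic (delta : R) : Prop :=
  is_metric d /\ proper_space /\ geodesic_space /\ hyperbolic delta.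

Definition cvg_at_infty (u : nat -> X) : Prop :=
  forall (o : X) (M : R), exists N : nat, forall i j, (N <= i)%N -> (N <= j)%N ->
    M <= gprod o (u i) (u j).

Definition seq_equiv (u v : nat -> X) : Prop :=
  forall (o : X) (M : R), exists N : nat, forall i j, (N <= i)%N -> (N <= j)%N ->
    M <= gprod o (u i) (v j).

Definition is_bdry_class (S : set (nat -> X)) : Prop :=
  exists u, cvg_at_infty u /\ S = [set v | cvg_at_infty v /\ seq_equiv u v].

Definition bdry := {S : set (nat -> X) | is_bdry_class S}.

Definition seq_to (u : nat -> X) (xi : bdry) : Prop := proj1_sig xi u.

Definition liminf2 (a : nat -> nat -> R) : \bar R :=
  ereal_sup [set ereal_inf [set (a i j)%:E | i in [set i | (N <= i)%N] & j in [set j | (N <= j)%N]]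
            | N in [set: nat]].

Definition bgprod (p : X) (xi eta : bdry) : \bar R :=
  ((2^-1)%:E * ereal_sup
     [set liminf2 (fun i j => (d p (x i) + d p (y j) - d (x i) (y j))%R)
     | x in [set x | seq_to x xi] & y in [set y | seq_to y eta]])%E.

Definition visual_metric (p : X) (eps : R) (dv : bdry -> bdry -> R) : Prop :=
  is_metric dv /\
  forall e1 e2 : bdry,
    ((2^-1)%:E * expeR (- (eps%:E * bgprod p e1 e2)) <= (dv e1 e2)%:E)%E /\
    ((dv e1 e2)%:E <= expeR (- (eps%:E * bgprod p e1 e2)))%E.

Definition geodesic_ray (p : X) (xi : bdry) (g : R -> X) : Prop :=
  g 0 = p /\
  (forall s t, 0 <= s -> 0 <= t -> d (g s) (g t) = `|s - t|) /\
  seq_to (fun n : nat => g n%:R) xi.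

Definition busemann_ray (g : R -> X) (x : X) : R :=
  lim ((fun t : R => d (g t) x - t) @ +oo).

Definition busemann (xi : bdry) (p : X) (x : X) : \bar R :=
  ereal_sup [set (busemann_ray g x)%:E | g in [set g | geodesic_ray p xi g]].

Definition bi_geodesic (e1 e2 : bdry) (s : R -> X) : Prop :=
  (forall a b, d (s a) (s b) = `|a - b|) /\
  seq_to (fun n : nat => s (- n%:R)) e1 /\
  seq_to (fun n : nat => s n%:R) e2.

Definition Hxp (xi : bdry) (p : X) (e1 e2 : bdry) : \bar R :=
  ereal_inf [set ereal_inf [set busemann xi p x | x in range s]
            | s in [set s | bi_geodesic e1 e2 s]].

Definition Dxp (xi : bdry) (p : X) (eps : R) (e1 e2 : bdry) : \bar R :=
  expeR (- (eps%:E * Hxp xi p e1 e2))%E.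

Definition compl_pt (xi : bdry) := {eta : bdry | eta <> xi}.

Definition parabolic_visual_metric (xi : bdry) (p : X) (eps : R)
    (dp : compl_pt xi -> compl_pt xi -> R) : Prop :=
  is_metric dp /\
  forall e1 e2 : compl_pt xi, e1 <> e2 ->
    ((2^-1)%:E * Dxp xi p eps (proj1_sig e1) (proj1_sig e2) <= (dp e1 e2)%:E)%E /\
    ((dp e1 e2)%:E <= Dxp xi p eps (proj1_sig e1) (proj1_sig e2))%E.

End Hyperbolic.

Section Inversion.
Variable R : realType.

Definition inversion_metric (Z : Type) (dz : Z -> Z -> R) (q : Z)
    (di : {x : Z | x <> q} -> {x : Z | x <> q} -> R) : Prop :=
  is_metric di /\
  forall x y : {x : Z | x <> q},
    dz (proj1_sig x) (proj1_sig y) / (4 * dz (proj1_sig x) q * dz (proj1_sig y) q)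
      <= di x y /\
    di x y <= dz (proj1_sig x) (proj1_sig y) / (dz (proj1_sig x) q * dz (proj1_sig y) q).

(* S_q(Z) = Z u {oo} is modelled by option Z, with None = oo *)
Definition sph_s (Z : Type) (dz : Z -> Z -> R) (q : Z) (a b : option Z) : R :=
  match a, b with
  | Some x, Some y => dz x y / ((1 + dz x q) * (1 + dz y q))
  | Some x, None => (1 + dz x q)^-1
  | None, Some y => (1 + dz y q)^-1
  | None, None => 0
  end.

Definition unbounded (Z : Type) (dz : Z -> Z -> R) : Prop :=
  forall (z : Z) (M : R), exists y, M < dz z y.

Definition sphericalization_metric (Z : Type) (dz : Z -> Z -> R) (q : Z)
    (ds : option Z -> option Z -> R) : Prop :=
  is_metric ds /\
  forall a b, sph_s dz q a b / 4 <= ds a b /\ ds a b <= sph_s dz q a b.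

Definition bilipschitz (A B : Type) (dA : A -> A -> R) (dB : B -> B -> R)
    (L : R) (f : A -> B) : Prop :=
  1 <= L /\ forall a b, dA a b / L <= dB (f a) (f b) /\ dB (f a) (f b) <= L * dA a b.

End Inversion.

Definition to_sph (R : realType) (X : Type) (d : X -> X -> R) (xi : bdry d)
    (x : bdry d) : option (compl_pt xi) :=
  match pselect (x = xi) with
  | left _ => None
  | right h => Some (exist _ x h)
  end.

Definition isolated_pt (R : realType) (T : Type) (dv : T -> T -> R) (xi : T) : Prop :=
  exists r : R, 0 < r /\ forall y, dv xi y < r -> y = xi.

Arguments parabolic_visual_metric {R X d} xi p eps dp.
Arguments inversion_metric {R Z} dz q di.

From HB Require Import structures.
From mathcomp Require Import all_boot all_order all_algebra.
From mathcomp Require Import all_classical all_reals.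
From mathcomp Require Import ereal topology normedtype sequences exp.
From mathcomp Require Import lra.
Set Implicit Arguments.
Unset Strict Implicit.
Unset Printing Implicit Defensive.
Import Order.TTheory GRing.Theory Num.Theory.
Import numFieldNormedType.Exports.
Local Open Scope classical_set_scope.
Local Open Scope ring_scope.

(* For eta1, eta2 <> xi put A = (eta1|eta2)_p - (eta1|xi)_p - (eta2|xi)_p.  Along every
   geodesic from eta1 to eta2 the Busemann function B_{xi,p} is at least A - O(delta),
   and at the point of the geodesic facing xi it is at most A + O(delta); hence
   H_{xi,p}(eta1,eta2) = A + O(delta).  Exponentiating, D_{xi,p,eps}(eta1,eta2) is
   comparable to d_{p,eps}(eta1,eta2) / (d_{p,eps}(eta1,xi) d_{p,eps}(eta2,xi)), i.e. to
   the inverted visual metric, which is (1).  For (2), sphericalizing (d_{p,eps})_xi at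
   eta undoes the inversion up to bounded distortion, because d_{p,eps} <= 1 and the
   weight d_{p,eps}(y,xi) (1 + (d_{p,eps})_xi(y,eta)) stays between two positive
   constants. *)

Section Metric.
Variables (R : realType) (T : Type) (dist : T -> T -> R).
Hypothesis dist_metric : is_metric dist.

Lemma is_metric_ge0 x y : 0 <= dist x y.
Proof. by case: dist_metric. Qed.

Lemma is_metric_sym x y : dist x y = dist y x.
Proof. by case: dist_metric => _ [_ []]. Qed.

Lemma is_metric_triangle x y z : dist x z <= dist x y + dist y z.
Proof. by case: dist_metric => _ [_ [_]]. Qed.

Lemma is_metric_xx x : dist x x = 0.
Proof. by case: dist_metric => _ [h _]; apply/h. Qed.

Lemma is_metric_gt0 x y : x <> y -> 0 < dist x y.
Proof.
move=> xy; rewrite lt_neqAle is_metric_ge0 andbT eq_sym.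
by apply/eqP => /(proj1 (proj1 (proj2 dist_metric) x y)).
Qed.

Lemma is_metric_neq0 x y : x <> y -> dist x y != 0.
Proof. by move/is_metric_gt0; rewrite lt0r => /andP[]. Qed.

End Metric.

Lemma normrB_le (R : realDomainType) (a b : R) : a <= b -> `|a - b| = b - a.
Proof. by move=> ab; rewrite distrC ger0_norm // subr_ge0. Qed.

Lemma normrB_ge (R : realDomainType) (a b : R) : b <= a -> `|a - b| = a - b.
Proof. by move=> ba; rewrite ger0_norm // subr_ge0. Qed.

Section GromovProduct.
Variables (R : realType) (X : Type) (d : X -> X -> R) (delta : R).
Hypothesis d_metric : is_metric d.
Hypothesis d_hyp : hyperbolic d delta.

Local Notation gp := (gprod d).
Local Notation dsym := (is_metric_sym d_metric).
Local Notation dtri := (is_metric_triangle d_metric).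

Lemma gprodC w x y : gp w x y = gp w y x.
Proof. by rewrite /gprod (dsym x y) (addrC (d w x)). Qed.

Lemma gprod_ge0 w x y : 0 <= gp w x y.
Proof. rewrite /gprod; have := dtri x w y; have := dsym x w; lra. Qed.

Lemma gprod_double w x y : d w x + d w y - d x y = 2 * gp w x y.
Proof. by rewrite /gprod mulrC divfK. Qed.

Lemma gprod_basepoint_le w w' x y : gp w x y <= gp w' x y + d w w'.
Proof. rewrite /gprod; have := dtri w w' x; have := dtri w w' y; lra. Qed.

Lemma hyperbolic_delta_ge0 (x : X) : 0 <= delta.
Proof. by have := d_hyp x x x x; rewrite minxx; lra. Qed.

Lemma gprod_chain2 w x y z c :
  c <= gp w x y -> c <= gp w y z -> c - delta <= gp w x z.
Proof.
move=> cxy cyz; have := d_hyp w x y z.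
have : c <= Num.min (gp w x y) (gp w y z) by rewrite le_min cxy cyz.
lra.
Qed.

Lemma gprod_chain3 w x y1 y2 z c :
  c <= gp w x y1 -> c <= gp w y1 y2 -> c <= gp w y2 z -> c - 2 * delta <= gp w x z.
Proof.
move=> c1 c2 c3; have c12 := gprod_chain2 c1 c2.
have c3' : c - delta <= gp w y2 z by have := hyperbolic_delta_ge0 w; lra.
have := gprod_chain2 c12 c3'; lra.
Qed.

End GromovProduct.

Section Boundary.
Variables (R : realType) (X : Type) (d : X -> X -> R) (delta : R).
Hypothesis d_metric : is_metric d.
Hypothesis d_hyp : hyperbolic d delta.

Local Notation gp := (gprod d).

Definition gprod_to_infty (w : X) (u v : nat -> X) : Prop :=
  forall M : R, exists N, forall i j, (N <= i)%N -> (N <= j)%N -> M <= gp w (u i) (v j).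

Lemma seq_to_gprod_to_infty (al : bdry d) u v w :
  seq_to u al -> seq_to v al -> gprod_to_infty w u v.
Proof.
case: al => S [u0 [cu0 HS]]; rewrite /seq_to /=; subst S => -[_ hu] [_ hv] M.
have [N1 h1] := hu w (M + delta); have [N2 h2] := hv w (M + delta).
exists (maxn N1 N2) => i j; rewrite !geq_max => /andP[i1 i2] /andP[j1 j2].
have a1 : M + delta <= gp w (u i) (u0 (maxn N1 N2)).
  by rewrite gprodC //; apply: h1; rewrite // leq_maxl.
have a2 : M + delta <= gp w (u0 (maxn N1 N2)) (v j) by apply: h2; rewrite // leq_maxr.
have := gprod_chain2 d_hyp a1 a2; lra.
Qed.

Definition liminf_gprods (p : X) (al be : bdry d) : set (\bar R) :=
  [set liminf2 (fun i j => (d p (x i) + d p (y j) - d (x i) (y j))%R)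
  | x in [set x | seq_to x al] & y in [set y | seq_to y be]].

Lemma ereal_sup_liminf_gprods p al be (r : R) :
  bgprod p al be = r%:E -> ereal_sup (liminf_gprods p al be) = (2 * r)%:E.
Proof.
rewrite /bgprod -/(liminf_gprods p al be).
case: (ereal_sup _) => [s| |] /=.
- by move=> [<-]; congr (_%:E); rewrite mulrA divff ?mul1r.
- by rewrite (mulry (2^-1 : R)) gtr0_sg ?invr_gt0 // mul1e.
- by rewrite (mulrNy (2^-1 : R)) gtr0_sg ?invr_gt0 // mul1e.
Qed.

Lemma bgprod_ge0 p (al be : bdry d) : (0 <= bgprod p al be)%E.
Proof.
rewrite /bgprod; apply: mule_ge0; first by rewrite lee_fin invr_ge0.
case: al => S [u0 [cu0 HS]]; case: be => T [v0 [cv0 HT]].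
apply: le_trans (ereal_sup_ubound _); last first.
  exists u0; first by rewrite /seq_to /= HS.
  by exists v0; first by rewrite /seq_to /= HT.
apply: le_trans (ereal_sup_ubound _); last by exists 0%N.
apply: le_ereal_inf_tmp => _ [i _ [j _ <-]].
by rewrite lee_fin gprod_double // mulr_ge0 ?gprod_ge0.
Qed.

Section Approximation.
Variables (p : X) (al be : bdry d) (r : R) (u v : nat -> X).
Hypotheses (hr : bgprod p al be = r%:E) (hu : seq_to u al) (hv : seq_to v be).

Lemma bgprod_approx_ge : exists N, forall i j, (N <= i)%N -> (N <= j)%N ->
  r - 2^-1 - 2 * delta <= gp p (u i) (v j).
Proof.
have : ((2 * r - 1)%:E < ereal_sup (liminf_gprods p al be))%E.
  by rewrite (ereal_sup_liminf_gprods hr) lte_fin; lra.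
case/ereal_sup_gt => _ [x hx [y hy <-]] /ereal_sup_gt[_ [N1 _ <-] hN].
have xy k l : (N1 <= k)%N -> (N1 <= l)%N -> r - 2^-1 <= gp p (x k) (y l).
  move=> hk hl.
  have := lt_le_trans hN (ereal_inf_lbound (ex_intro2 _ _ k hk (ex_intro2 _ _ l hl erefl))).
  by rewrite lte_fin gprod_double //; lra.
have [N2 ux] := seq_to_gprod_to_infty p hu hx (r - 2^-1).
have [N3 yv] := seq_to_gprod_to_infty p hy hv (r - 2^-1).
exists (maxn N2 N3) => i j; rewrite !geq_max => /andP[i2 _] /andP[_ j3].
set k := maxn N1 (maxn N2 N3); have := leqnn k; rewrite {1}/k !geq_max.
case/and3P=> k1 k2 k3.
have := gprod_chain3 d_hyp (ux i k i2 k2) (xy k k k1 k1) (yv k j k3 j3); lra.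
Qed.

Lemma bgprod_approx_le : exists N, forall i j, (N <= i)%N -> (N <= j)%N ->
  gp p (u i) (v j) <= r + 2^-1 + 2 * delta.
Proof.
have [N2 uu] := seq_to_gprod_to_infty p hu hu (r + 2 + 2 * delta).
have [N3 vv] := seq_to_gprod_to_infty p hv hv (r + 2 + 2 * delta).
have small N : exists k l, [/\ (N <= k)%N, (N <= l)%N & gp p (u k) (v l) < r + 2^-1].
  have : (ereal_inf [set (d p (u i) + d p (v j) - d (u i) (v j))%:E
       | i in [set i | (N <= i)%N] & j in [set j | (N <= j)%N]] < (2 * r + 1)%:E)%E.
    apply: (@le_lt_trans _ _ (2 * r)%:E); last by rewrite lte_fin; lra.
    have uv : (liminf2 (fun i j => (d p (u i) + d p (v j) - d (u i) (v j))%R) <= (2 * r)%:E)%E.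
      by rewrite -(ereal_sup_liminf_gprods hr); apply: ereal_sup_ubound; exists u => //; exists v.
    by apply: le_trans uv; apply: ereal_sup_ubound; exists N.
  case/ereal_inf_lt => _ [k hk [l hl <-]]; rewrite lte_fin gprod_double // => kl.
  by exists k, l; split => //; lra.
exists (maxn N2 N3) => i j; rewrite !geq_max => /andP[i2 _] /andP[_ j3].
rewrite leNgt; apply/negP => ij.
have [k [l []]] := small (maxn N2 N3).
rewrite !geq_max => /andP[k2 _] /andP[_ l3] kl.
have a1 : r + 2^-1 + 2 * delta <= gp p (u k) (u i) by have := uu k i k2 i2; lra.
have a3 : r + 2^-1 + 2 * delta <= gp p (v j) (v l) by have := vv j l j3 l3; lra.
have := gprod_chain3 d_hyp a1 (ltW ij) a3; lra.
Qed.

Lemma bgprod_approx : exists N, forall i j, (N <= i)%N -> (N <= j)%N ->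
  r - 2^-1 - 2 * delta <= gp p (u i) (v j) <= r + 2^-1 + 2 * delta.
Proof.
have [N1 lo] := bgprod_approx_ge; have [N2 hi] := bgprod_approx_le.
exists (maxn N1 N2) => i j; rewrite !geq_max => /andP[i1 i2] /andP[j1 j2].
by rewrite lo ?hi.
Qed.

End Approximation.
End Boundary.

Lemma nonincreasing_cvg_inf (R : realType) (f : R -> R) (m : R) :
  (forall s t, 0 <= s -> s <= t -> f t <= f s) ->
  (forall t, 0 <= t -> m <= f t) ->
  f @ +oo --> inf [set f t | t in [set t | 0 <= t]].
Proof.
move=> fdec fm; set E := [set f t | t in [set t | 0 <= t]].
have hlb : has_lbound E by exists m => _ [t t0 <-]; exact: fm.
have hne : E !=set0 by exists (f 0); exists 0 => /=.
apply/cvgrPdist_le => _/posnumP[e].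
have [_ [s s0 <-] fse] := @inf_adherent R E e%:num (gt0 e) (conj hne hlb).
near=> n; have sn : s <= n by near: n; apply: nbhs_pinfty_ge; rewrite num_real.
have := ge_inf hlb (ex_intro2 _ _ n (le_trans s0 sn) erefl).
have := fdec _ _ s0 sn.
by move=> h1 h2; rewrite ler_distlC; apply/andP; split; lra.
Unshelve. all: by end_near. Qed.

Lemma natr_bounds_eventually (R : realType) (s : R) :
  exists T : nat, forall i : nat, (T <= i)%N -> - i%:R <= s <= i%:R.
Proof.
exists (Num.Def.archi_bound `|s|) => i hi.
have bound_s := archi_boundP (normr_ge0 s).
have bound_i : ((Num.Def.archi_bound `|s|)%:R <= i%:R :> R) by rewrite ler_nat.
have := ler_norm s; have := ler_norm (- s); rewrite normrN.
by move=> ? ?; apply/andP; split; lra.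
Qed.

Section BusemannRay.
Variables (R : realType) (X : Type) (d : X -> X -> R).
Hypothesis d_metric : is_metric d.
Variables (p : X) (xi : bdry d) (g : R -> X).
Hypothesis hg : geodesic_ray p xi g.

Local Notation dsym := (is_metric_sym d_metric).
Local Notation dtri := (is_metric_triangle d_metric).

Lemma ray_dist s t : 0 <= s -> 0 <= t -> d (g s) (g t) = `|s - t|.
Proof. by case: hg => _ [h _]; apply: h. Qed.

Lemma ray_dist_base (n : nat) : d p (g n%:R) = n%:R.
Proof.
have := ray_dist (ler0n _ 0) (ler0n _ n).
by case: hg => -> _; rewrite normrB_le ?ler0n // subr0.
Qed.

Lemma ray_shift_ge x t : 0 <= t -> - d p x <= d (g t) x - t.
Proof.
move=> t0; have := dtri (g t) x (g 0).
by case: hg => h0 _; rewrite ray_dist // subr0 ger0_norm // h0 (dsym x p); lra.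
Qed.

Lemma busemann_ray_inf x :
  busemann_ray d g x = inf [set d (g t) x - t | t in [set t | 0 <= t]].
Proof.
apply: cvg_lim => //; apply: (@nonincreasing_cvg_inf _ _ (- d p x)).
- move=> s t s0 st; have := dtri (g t) (g s) x.
  by rewrite ray_dist ?(le_trans s0 st) // ger0_norm; lra.
- exact: ray_shift_ge.
Qed.

Lemma busemann_ray_le x (n : nat) : busemann_ray d g x <= d (g n%:R) x - n%:R.
Proof.
rewrite busemann_ray_inf; apply: ge_inf; last by exists n%:R; rewrite //= ler0n.
by exists (- d p x) => _ [t t0 <-]; exact: ray_shift_ge.
Qed.

Lemma busemann_ray_ge x c N :
  (forall n, (N <= n)%N -> c <= d (g n%:R) x - n%:R) -> c <= busemann_ray d g x.
Proof.
move=> h; rewrite busemann_ray_inf.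
apply: lb_le_inf; first by exists (d (g 0) x - 0); exists 0 => /=.
move=> _ [t t0 <-]; set n := maxn N (Num.Def.archi_bound t).
have tn : t <= n%:R.
  by apply/ltW/(lt_le_trans (archi_boundP t0)); rewrite ler_nat leq_maxr.
apply: (le_trans (h n (leq_maxl _ _))).
have := dtri (g n%:R) (g t) x.
by rewrite ray_dist // ?(le_trans t0 tn) // ger0_norm ?subr_ge0 //; lra.
Qed.

End BusemannRay.

Section GeodesicEstimates.
Variables (R : realType) (X : Type) (d : X -> X -> R) (delta : R).
Hypothesis d_metric : is_metric d.
Hypothesis d_hyp : hyperbolic d delta.

Local Notation gp := (gprod d).

Lemma dist_sub_between p x a b c : d a b = d x a + d x b ->
  d x c - d p c = gp p a b - gp p a c - gp p b c + gp x a c + gp x b c.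
Proof. by move=> h; rewrite /gprod; lra. Qed.

Lemma gprod_sum_between x a b c m : d a b = d x a + d x b ->
  `|gp x a c - gp x b c| <= m -> gp x a c + gp x b c <= 2 * delta + m.
Proof.
move=> h; rewrite ler_norml => /andP[m1 m2]; have := d_hyp x a c b.
have -> : gp x a b = 0 by rewrite /gprod h subrr mul0r.
by rewrite (gprodC d_metric x c b); case: (leP (gp x a c) (gp x b c)) => _; lra.
Qed.

Lemma gprod_perturb w a a' c c' M :
  M <= gp w a a' -> M <= gp w c c' -> gp w a c + 2 * delta + 1 <= M ->
  gp w a c - 2 * delta <= gp w a' c' <= gp w a c + 2 * delta + 1.
Proof.
move=> aa cc acM; have d0 := hyperbolic_delta_ge0 d_hyp w.
apply/andP; split.
  have a1 : gp w a c <= gp w a' a by rewrite (gprodC d_metric w a'); lra.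
  have a3 : gp w a c <= gp w c c' by lra.
  by have := gprod_chain3 d_hyp a1 (lexx _) a3.
rewrite leNgt; apply/negP => big.
have a1 : gp w a c + 2 * delta + 1 <= gp w a a' by lra.
have a3 : gp w a c + 2 * delta + 1 <= gp w c' c by rewrite (gprodC d_metric w c'); lra.
have := gprod_chain3 d_hyp a1 (ltW big) a3; lra.
Qed.

End GeodesicEstimates.

Section BusemannHeight.
Variables (R : realType) (X : Type) (d : X -> X -> R) (delta : R).
Hypothesis d_metric : is_metric d.
Hypothesis d_hyp : hyperbolic d delta.

Local Notation gp := (gprod d).

Variables (p : X) (xi e1 e2 : bdry d) (r12 r1 r2 : R).
Hypotheses (h12 : bgprod p e1 e2 = r12%:E) (h1 : bgprod p e1 xi = r1%:E)
  (h2 : bgprod p e2 xi = r2%:E).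
Variable g0 : R -> X.
Hypothesis hg0 : geodesic_ray p xi g0.

Lemma Hxp_ge : ((r12 - r1 - r2 - (16 * delta + 6))%:E <= Hxp xi p e1 e2)%E.
Proof.
have d0 := hyperbolic_delta_ge0 d_hyp p.
apply: le_ereal_inf_tmp => _ [s [sd [su sv]] <-].
apply: le_ereal_inf_tmp => _ [_ [t _ <-] <-].
apply: le_trans (ereal_sup_ubound (ex_intro2 _ _ g0 hg0 erefl)); rewrite lee_fin.
have hc : seq_to (fun n : nat => g0 n%:R) xi by case: hg0 => _ [].
have [N1 a12] := bgprod_approx d_metric d_hyp h12 su sv.
have [N2 a1] := bgprod_approx d_metric d_hyp h1 su hc.
have [N3 a2] := bgprod_approx d_metric d_hyp h2 sv hc.
have [T tT] := natr_bounds_eventually t.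
apply: (busemann_ray_ge d_metric hg0 (N := maxn N1 (maxn N2 (maxn N3 T)))) => n.
rewrite !geq_max => /and4P[n1 n2 n3 nT].
have nm : (n <= n + T)%N := leq_addr _ _.
set m := (n + T)%N in nm *.
have [m0 /andP[tl tr]] : 0 <= m%:R :> R /\ - m%:R <= t <= m%:R.
  by split; [exact: ler0n | apply: tT; exact: leq_addl].
have between : d (s (- m%:R)) (s m%:R) = d (s t) (s (- m%:R)) + d (s t) (s m%:R).
  have mm : - m%:R <= m%:R :> R by lra.
  by rewrite !sd (normrB_le mm) (normrB_ge tl) (normrB_le tr); lra.
have := dist_sub_between p (g0 n%:R) between.
rewrite (ray_dist_base hg0) (is_metric_sym d_metric (g0 n%:R)).
have := gprod_ge0 d_metric (s t) (s (- m%:R)) (g0 n%:R).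
have := gprod_ge0 d_metric (s t) (s m%:R) (g0 n%:R).
have /andP[+ _] := a12 m m (leq_trans n1 nm) (leq_trans n1 nm).
have /andP[_ +] := a1 m n (leq_trans n2 nm) n2.
have /andP[_ +] := a2 m n (leq_trans n3 nm) n3.
lra.
Qed.

Variable sg : R -> X.
Hypothesis hsg : bi_geodesic e1 e2 sg.

Local Notation w := (sg 0).
Local Notation u := (fun n : nat => sg (- n%:R)).
Local Notation v := (fun n : nat => sg n%:R).
Local Notation c0 := (fun n : nat => g0 n%:R).

Section BaseIndex.
Variables (k0 : nat) (M : R).
Hypotheses (uu : forall i, (k0 <= i)%N -> M <= gp w (u k0) (u i))
  (vv : forall i, (k0 <= i)%N -> M <= gp w (v k0) (v i))
  (cc : forall i, (k0 <= i)%N -> M + delta <= gp w (c0 i) (c0 k0))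
  (PM : gp w (u k0) (c0 k0) + 2 * delta + 1 <= M)
  (QM : gp w (v k0) (c0 k0) + 2 * delta + 1 <= M).

Local Notation P := (gp w (u k0) (c0 k0)).
Local Notation Q := (gp w (v k0) (c0 k0)).

(* sg (Q - P) is, up to O(delta), the point of sg closest to xi seen from w. *)
Lemma busemann_bi_geodesic_le :
  (busemann xi p (sg (Q - P)) <= (r12 - r1 - r2 + (16 * delta + 6))%:E)%E.
Proof.
have d0 := hyperbolic_delta_ge0 d_hyp p.
case: (hsg) => sd [su sv].
apply: ge_ereal_sup => _ [g hg <-]; rewrite lee_fin.
have hc : seq_to (fun n : nat => g n%:R) xi by case: hg => _ [].
set c := (fun n : nat => g n%:R) in hc.
have hc0 : seq_to c0 xi by case: hg0 => _ [].
have [N1 a12] := bgprod_approx d_metric d_hyp h12 su sv.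
have [N2 a1] := bgprod_approx d_metric d_hyp h1 su hc.
have [N3 a2] := bgprod_approx d_metric d_hyp h2 sv hc.
have [Ncc ccc] := seq_to_gprod_to_infty d_metric d_hyp w hc hc0 (M + delta).
have [T tT] := natr_bounds_eventually (Q - P).
set i := maxn k0 (maxn N1 (maxn N2 (maxn N3 (maxn Ncc T)))).
have := leqnn i; rewrite {1}/i !geq_max => /and5P[i0 i1 i2 i3 /andP[i4 i5]].
have /andP[tl tr] := tT i i5.
have cM : M <= gp w (c0 k0) (c i).
  have := gprod_chain2 d_hyp (ccc i i i4 i4) (cc i0).
  by rewrite (gprodC d_metric w (c i)); lra.
have /andP[tul tuu] := gprod_perturb d_metric d_hyp (uu i0) cM PM.
have /andP[tvl tvu] := gprod_perturb d_metric d_hyp (vv i0) cM QM.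
set P' := gp w (u k0) (c0 k0) in tl tr tul tuu *.
set Q' := gp w (v k0) (c0 k0) in tl tr tvl tvu *.
set x := sg (Q' - P').
have ii : - i%:R <= i%:R :> R by have := ler0n R i; lra.
have dxa : d x (u i) = Q' - P' + i%:R by rewrite sd (normrB_ge tl); lra.
have dxb : d x (v i) = i%:R - (Q' - P') by rewrite sd (normrB_le tr).
have dwa : d w (u i) = i%:R by rewrite sd normrB_ge; lra.
have dwb : d w (v i) = i%:R by rewrite sd normrB_le ?subr0.
have between : d (u i) (v i) = d x (u i) + d x (v i).
  by rewrite dxa dxb sd (normrB_le ii); lra.
have shift : gp x (u i) (c i) - gp x (v i) (c i) =
    gp w (u i) (c i) - gp w (v i) (c i) + (Q' - P').
  by rewrite /gprod dxa dxb dwa dwb; lra.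
have sum : gp x (u i) (c i) + gp x (v i) (c i) <= 2 * delta + (4 * delta + 1).
  apply: (gprod_sum_between d_metric d_hyp between).
  by rewrite shift ler_norml; apply/andP; split; lra.
apply: le_trans (busemann_ray_le d_metric hg x i) _.
rewrite (is_metric_sym d_metric (g i%:R)) -/(c i).
have := dist_sub_between p (c i) between.
have := ray_dist_base hg i; rewrite -/(c i).
have /andP[_ +] := a12 i i i1 i1.
have /andP[+ _] := a1 i i i2 i2.
have /andP[+ _] := a2 i i i3 i3.
lra.
Qed.

End BaseIndex.

Lemma Hxp_le : (Hxp xi p e1 e2 <= (r12 - r1 - r2 + (16 * delta + 6))%:E)%E.
Proof.
have d0 := hyperbolic_delta_ge0 d_hyp p.
case: (hsg) => _ [su sv].
have hc0 : seq_to c0 xi by case: hg0 => _ [].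
set M := `|r1| + `|r2| + 4 * delta + 2 + d w p.
have [Nb1 b1] := bgprod_approx d_metric d_hyp h1 su hc0.
have [Nb2 b2] := bgprod_approx d_metric d_hyp h2 sv hc0.
have [Nu uu] := seq_to_gprod_to_infty d_metric d_hyp w su su M.
have [Nv vv] := seq_to_gprod_to_infty d_metric d_hyp w sv sv M.
have [Nc cc] := seq_to_gprod_to_infty d_metric d_hyp w hc0 hc0 (M + delta).
set k0 := maxn Nb1 (maxn Nb2 (maxn Nu (maxn Nv Nc))).
have := leqnn k0; rewrite {1}/k0 !geq_max => /and5P[k1 k2 k3 k4 k5]; clearbody k0.
have PM : gp w (u k0) (c0 k0) + 2 * delta + 1 <= M.
  have /andP[_ +] := b1 k0 k0 k1 k1.
  have := gprod_basepoint_le d_metric w p (u k0) (c0 k0).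
  by rewrite /M; have := ler_norm r1; have := normr_ge0 r2; lra.
have QM : gp w (v k0) (c0 k0) + 2 * delta + 1 <= M.
  have /andP[_ +] := b2 k0 k0 k2 k2.
  have := gprod_basepoint_le d_metric w p (v k0) (c0 k0).
  by rewrite /M; have := ler_norm r2; have := normr_ge0 r1; lra.
apply: le_trans (ereal_inf_lbound (ex_intro2 _ _ sg hsg erefl)) _.
apply: le_trans (ereal_inf_lbound _) (busemann_bi_geodesic_le _ _ _ PM QM).
- by exists (sg (gp w (v k0) (c0 k0) - gp w (u k0) (c0 k0))) => //; eexists.
- by move=> i ki; apply: uu; rewrite // (leq_trans k3).
- by move=> i ki; apply: vv; rewrite // (leq_trans k4).
- by move=> i ki; apply: cc; rewrite // (leq_trans k5).
Qed.

End BusemannHeight.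

Lemma proj1_sig_neq (T : Type) (P : T -> Prop) (a b : {x | P x}) :
  a <> b -> proj1_sig a <> proj1_sig b.
Proof.
case: a b => [a ha] [b hb] /= nab eab; apply: nab; subst b.
by congr exist; apply: Prop_irrelevance.
Qed.

Lemma visual_bound_fin (R : realType) (eps t : R) (y : \bar R) : 0 < eps -> t != 0 ->
  ((2^-1)%:E * expeR (- (eps%:E * y)) <= t%:E)%E -> (t%:E <= expeR (- (eps%:E * y)))%E ->
  exists r, y = r%:E /\ 2^-1 * expR (- (eps * r)) <= t <= expR (- (eps * r)).
Proof.
move=> e0 t0; case: y => [r| |] /=.
- by rewrite !lee_fin => h1 h2; exists r; rewrite h1 h2.
- rewrite mulry gtr0_sg // mul1e /= mule0 !lee_fin => h1 h2.
  by move: t0; rewrite eq_le h2 /=; lra.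
- by rewrite mulrNy gtr0_sg // mul1e /= mulry gtr0_sg ?invr_gt0 // mul1e leNgt ltey.
Qed.

Lemma inverted_visual_comparable (R : realType) (E1 E2 Z D eK u v w q t : R) :
  0 < E1 -> 0 < E2 -> 0 < Z -> 0 < eK -> D <= Z * eK -> Z <= D * eK ->
  2^-1 * E1 <= u <= E1 -> 2^-1 * E2 <= v <= E2 ->
  2^-1 * (Z * E1 * E2) <= w <= Z * E1 * E2 -> 2^-1 * D <= q <= D ->
  w / (4 * u * v) <= t -> t <= w / (u * v) ->
  q / (8 * eK) <= t /\ t <= 8 * eK * q.
Proof.
move=> E1p E2p Zp eKp DZ ZD /andP[u1 u2] /andP[v1 v2] /andP[w1 w2] /andP[q1 q2] t1 t2.
have up : 0 < u by lra.
have vp : 0 < v by lra.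
have uv : 0 < u * v := mulr_gt0 up vp.
have E12 : 0 < E1 * E2 := mulr_gt0 E1p E2p.
move: t1; rewrite -mulrA ler_pdivrMr ?mulr_gt0 // => t1.
move: t2; rewrite ler_pdivlMr // => t2.
have t0 : 0 < t.
  have : 0 < t * (4 * (u * v)) by have := mulr_gt0 Zp E12; lra.
  by rewrite pmulr_lgt0 // mulr_gt0.
have Zt : Z <= 8 * t.
  have tuv : t * (u * v) <= t * (E1 * E2).
    by apply: ler_wpM2l; [exact: ltW | apply: ler_pM; lra].
  by rewrite -(ler_pM2r E12); lra.
have tZ : t <= 4 * Z.
  have Zuv : Z * (E1 * E2) <= Z * ((2 * u) * (2 * v)).
    by apply: ler_wpM2l; [exact: ltW | apply: ler_pM; lra].
  by rewrite -(ler_pM2r uv); lra.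
have := ler_wpM2r (ltW eKp) Zt; have := ler_wpM2r (ltW eKp) q1.
by rewrite ler_pdivrMr ?mulr_gt0 //; split; lra.
Qed.

Section ParabolicInversion.
Variables (R : realType) (X : Type) (d : X -> X -> R) (delta : R).
Hypothesis d_metric : is_metric d.
Hypothesis d_hyp : hyperbolic d delta.

Lemma Hxp_fin_bounds (xi : bdry d) p e1 e2 (r12 r1 r2 h : R) :
  bgprod p e1 e2 = r12%:E -> bgprod p e1 xi = r1%:E -> bgprod p e2 xi = r2%:E ->
  Hxp xi p e1 e2 = h%:E -> `|h - (r12 - r1 - r2)| <= 16 * delta + 6.
Proof.
move=> h12 h1 h2 hH.
have [[sg hsg] | nosg] := pselect (exists sg, bi_geodesic e1 e2 sg); last first.
  move: hH; rewrite /Hxp.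
  have -> : [set ereal_inf [set busemann xi p x | x in range s]
            | s in [set s | bi_geodesic e1 e2 s]] = set0.
    by apply/seteqP; split => // z [s hs _]; apply: nosg; exists s.
  by rewrite ereal_inf0.
have [[g0 hg0] | nog] := pselect (exists g, geodesic_ray p xi g); last first.
  have : (Hxp xi p e1 e2 <= busemann xi p (sg 0%R))%E.
    apply: le_trans (ereal_inf_lbound (ex_intro2 _ _ sg hsg erefl)) _.
    by apply: ereal_inf_lbound; exists (sg 0%R) => //; exists 0%R.
  rewrite /busemann.
  have -> : [set (busemann_ray d g (sg 0%R))%:E | g in [set g | geodesic_ray p xi g]] = set0.
    by apply/seteqP; split => // z [g hg _]; apply: nog; exists g.
  by rewrite ereal_sup0 hH leeNy_eq.
have := Hxp_ge d_metric d_hyp h12 h1 h2 hg0.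
have := Hxp_le d_metric d_hyp h12 h1 h2 hg0 hsg.
by rewrite hH !lee_fin ler_norml => ? ?; apply/andP; split; lra.
Qed.

Lemma parabolic_inversion_comparable (xi : bdry d) p (eps eps0 : R) dv dp di :
  0 < eps -> eps <= eps0 ->
  visual_metric p eps dv -> parabolic_visual_metric xi p eps dp ->
  inversion_metric dv xi di ->
  forall a b, dp a b / (8 * expR (eps0 * (16 * delta + 6))) <= di a b /\
              di a b <= 8 * expR (eps0 * (16 * delta + 6)) * dp a b.
Proof.
move=> e0 ee0 [mv hv] [mp hp] [mi hi] a b.
have [<- | nab] := pselect (a = b).
  by rewrite !is_metric_xx // mul0r mulr0.
have [r12 [h12 w12]] := visual_bound_fin e0 (is_metric_neq0 mv (proj1_sig_neq nab))
  (proj1 (hv _ _)) (proj2 (hv _ _)).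
have [r1 [h1 w1]] := visual_bound_fin e0 (is_metric_neq0 mv (proj2_sig a))
  (proj1 (hv _ _)) (proj2 (hv _ _)).
have [r2 [h2 w2]] := visual_bound_fin e0 (is_metric_neq0 mv (proj2_sig b))
  (proj1 (hv _ _)) (proj2 (hv _ _)).
have [h [hH wh]] := visual_bound_fin e0 (is_metric_neq0 mp nab)
  (proj1 (hp a b nab)) (proj2 (hp a b nab)).
have := Hxp_fin_bounds h12 h1 h2 hH; rewrite ler_norml => /andP[hlo hhi].
set K := 16 * delta + 6 in hlo hhi *.
set E1 := expR (- (eps * r1)) in w1.
set E2 := expR (- (eps * r2)) in w2.
set Z := expR (- (eps * (r12 - r1 - r2))).
set eK := expR (eps * K).
have E12 : expR (- (eps * r12)) = Z * E1 * E2 by rewrite -!expRD; congr expR; lra.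
rewrite E12 in w12.
have DZ : expR (- (eps * h)) <= Z * eK.
  by rewrite -expRD ler_expR; have := ler_wpM2l (ltW e0) hlo; lra.
have ZD : Z <= expR (- (eps * h)) * eK.
  by rewrite -expRD ler_expR; have := ler_wpM2l (ltW e0) hhi; lra.
have [lo up] := inverted_visual_comparable (expR_gt0 _) (expR_gt0 _) (expR_gt0 _)
  (expR_gt0 _) DZ ZD w1 w2 w12 wh (proj1 (hi a b)) (proj2 (hi a b)).
have K0 : 0 <= K by rewrite /K; have := hyperbolic_delta_ge0 d_hyp p; lra.
have eKK : 8 * eK <= 8 * expR (eps0 * K).
  by rewrite ler_pM2l // ler_expR ler_wpM2r.
have dp0 := is_metric_ge0 mp a b; have di0 := is_metric_ge0 mi a b.
have eK0 : 0 < eK := expR_gt0 _.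
move: lo up; rewrite -/eK ler_pdivrMr ?mulr_gt0 // => lo up.
by rewrite ler_pdivrMr ?mulr_gt0 ?expR_gt0 //; split; nra.
Qed.

End ParabolicInversion.

Lemma bilipschitz_weaken (R : realFieldType) (L A B x y : R) :
  0 < A -> A <= L -> B <= L -> 0 <= x -> x / A <= y <= B * x ->
  x / L <= y /\ y <= L * x.
Proof.
move=> A0 AL BL x0 /andP[lo hi]; split; last by apply: le_trans hi _; rewrite ler_wpM2r.
by apply: le_trans lo; rewrite ler_wpM2l // lef_pV2 ?posrE // (lt_le_trans A0).
Qed.

Section ToSph.
Variables (R : realType) (X : Type) (d : X -> X -> R) (xi : bdry d).

Lemma to_sph_self : to_sph xi xi = None.
Proof. by rewrite /to_sph; case: pselect. Qed.

Lemma to_sph_val (y : compl_pt xi) : to_sph xi (sval y) = Some y.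
Proof.
rewrite /to_sph; case: pselect => h; first by case: (proj2_sig y).
by case: y h => y hy h /=; congr Some; congr exist; exact: Prop_irrelevance.
Qed.

End ToSph.

Section Sphericalization.
Variables (R : realType) (X : Type) (d : X -> X -> R) (xi : bdry d).
Variables (dv : bdry d -> bdry d -> R) (di dp : compl_pt xi -> compl_pt xi -> R) (Lb : R).
Hypotheses (mv : is_metric dv) (dv_le1 : forall x y, dv x y <= 1).
Hypotheses (hi : inversion_metric dv xi di) (mp : is_metric dp) (Lb1 : 1 <= Lb).
Hypothesis dp_di : forall a b, dp a b / Lb <= di a b /\ di a b <= Lb * dp a b.
Variable eta : compl_pt xi.

Local Notation c := (dv (sval eta) xi).
Local Notation weight y := (dv (sval y) xi * (1 + dp y eta)).
Local Notation wmin := (c / (8 * Lb)).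
Local Notation wmax := (1 + Lb / c).

Lemma dv_xi_gt0 (y : compl_pt xi) : 0 < dv (sval y) xi.
Proof. exact/(is_metric_gt0 mv)/(proj2_sig y). Qed.

Lemma weight_bounds (y : compl_pt xi) : wmin <= weight y <= wmax.
Proof.
set u := dv (sval y) xi; set q := dp y eta.
have c0 : 0 < c := dv_xi_gt0 eta; have u0 : 0 < u := dv_xi_gt0 y.
have L1 := Lb1; have Lb0 : 0 < Lb by lra.
have q0 : 0 <= q := is_metric_ge0 mp y eta.
have u1 : u <= 1 := dv_le1 _ _.
have [dil diu] := (proj2 hi) y eta; rewrite -/u in dil diu.
set W := dv (sval y) (sval eta) in dil diu.
have W1 : W <= 1 := dv_le1 _ _.
set t := di y eta in dil diu.
have [qt tq] := dp_di y eta; rewrite -/q -/t in qt tq.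
have uc0 : 0 < u * c := mulr_gt0 u0 c0.
move: diu; rewrite ler_pdivlMr // => diu.
move: dil; rewrite -mulrA ler_pdivrMr ?mulr_gt0 // => dil.
move: qt; rewrite ler_pdivrMr // => qt.
have tri : c <= W + u.
  by rewrite /W /u (is_metric_sym mv (sval y)); apply: is_metric_triangle.
apply/andP; split.
  rewrite ler_pdivrMr ?mulr_gt0 //.
  have uLb : u <= u * Lb by rewrite ler_peMr // ltW.
  have uqLb : 0 <= u * q * Lb by rewrite !mulr_ge0 // ltW.
  have [uc | cu] := leP u (c / 2); last by lra.
  have ucq : (u * c) * t <= (u * c) * (q * Lb) by rewrite ler_pM2l // mulrC.
  have : c * 1 <= c * (8 * (u * q * Lb)) by lra.
  by rewrite ler_pM2l //; lra.
have cLb : c * (Lb / c) = Lb by rewrite mulrC divfK ?gt_eqF.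
rewrite -(ler_pM2l c0) (mulrDr c 1) mulr1 cLb.
have cuq : c * u * q <= c * u * (t * Lb) by rewrite ler_pM2l ?mulr_gt0.
have cu : c * u <= c by rewrite ger_pMr.
have tW : t * (u * c) * Lb <= W * Lb by rewrite ler_pM2r.
have WLb : W * Lb <= Lb by rewrite ger_pMl.
lra.
Qed.

Lemma wmin_gt0 : 0 < wmin.
Proof. have L1 := Lb1; rewrite divr_gt0 ?dv_xi_gt0 // mulr_gt0 //; lra. Qed.

Variable ds : option (compl_pt xi) -> option (compl_pt xi) -> R.
Hypothesis hs : sphericalization_metric dp eta ds.

Lemma sph_infty_comparable (y : compl_pt xi) :
  dv (sval y) xi / (4 * wmax) <= ds (Some y) None <= dv (sval y) xi / wmin.
Proof.
have [hl hu] := proj2 hs (Some y) None; rewrite /= in hl hu.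
have /andP[wl wu] := weight_bounds y.
have u0 := dv_xi_gt0 y; have m0 := wmin_gt0.
have s0 : 0 <= ds (Some y) None := is_metric_ge0 (proj1 hs) _ _.
set u := dv (sval y) xi in u0 wl wu *; set U := 1 + dp y eta in hl hu wl wu.
set s := ds (Some y) None in hl hu s0 *.
have U0 : 0 < U by rewrite /U ltr_pwDl ?(is_metric_ge0 mp).
have sU1 : 1 <= 4 * (s * U).
  by have := ler_wpM2r (ltW U0) hl; rewrite mulrAC mulVf ?gt_eqF //; lra.
have sU2 : s * U <= 1 by have := ler_wpM2r (ltW U0) hu; rewrite mulVf ?gt_eqF.
have M0 : 0 < wmax by lra.
rewrite ler_pdivrMr ?mulr_gt0 // ler_pdivlMr //.
have := ler_wpM2l (ltW u0) sU1; have := ler_wpM2l s0 wu.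
have := ler_wpM2l s0 wl; have := ler_wpM2l (ltW u0) sU2.
by move=> *; apply/andP; split; lra.
Qed.

Lemma sph_pair_comparable (y z : compl_pt xi) :
  dv (sval y) (sval z) / (16 * Lb * wmax ^+ 2) <= ds (Some y) (Some z) <=
  Lb * dv (sval y) (sval z) / wmin ^+ 2.
Proof.
have [hl hu] := proj2 hs (Some y) (Some z); rewrite /= in hl hu.
have [hil hiu] := proj2 hi y z; have [qt tq] := dp_di y z.
have /andP[wyl wyu] := weight_bounds y; have /andP[wzl wzu] := weight_bounds z.
have uy0 := dv_xi_gt0 y; have uz0 := dv_xi_gt0 z; have m0 := wmin_gt0.
have L1 := Lb1; have M0 : 0 < wmax by lra.
have s0 : 0 <= ds (Some y) (Some z) := is_metric_ge0 (proj1 hs) _ _.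
have t0 : 0 <= di y z := is_metric_ge0 (proj1 hi) _ _.
set uy := dv (sval y) xi in uy0 wyl wyu hil hiu *.
set uz := dv (sval z) xi in uz0 wzl wzu hil hiu *.
set Uy := 1 + dp y eta in hl hu wyl wyu.
set Uz := 1 + dp z eta in hl hu wzl wzu.
set W := dv (sval y) (sval z) in hil hiu *.
set s := ds (Some y) (Some z) in hl hu s0 *.
set q := dp y z in hl hu qt tq.
set t := di y z in hil hiu qt tq t0.
have Uy0 : 0 < Uy by rewrite /Uy ltr_pwDl ?(is_metric_ge0 mp).
have Uz0 : 0 < Uz by rewrite /Uz ltr_pwDl ?(is_metric_ge0 mp).
have P0 : 0 < uy * uz := mulr_gt0 uy0 uz0.
have V0 : 0 < Uy * Uz := mulr_gt0 Uy0 Uz0.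
have Lbp : 0 < Lb by lra.
rewrite ler_pdivrMr ?ltr0n // in hl; rewrite ler_pdivrMr // in hl; rewrite ler_pdivlMr // in hu.
rewrite -mulrA ler_pdivrMr ?mulr_gt0 // in hil; rewrite ler_pdivlMr // in hiu.
rewrite ler_pdivrMr // in qt.
have PV : wmin * wmin <= (uy * Uy) * (uz * Uz).
  by apply: ler_pM => //; exact: ltW.
have VP : (uy * Uy) * (uz * Uz) <= wmax * wmax.
  by apply: ler_pM => //; apply/ltW/(lt_le_trans m0); [exact: wyl | exact: wzl].
have Lb0 := ltW Lbp.
have den : 0 < 16 * Lb * (wmax * wmax) by rewrite !mulr_gt0 ?ltr0n.
rewrite !expr2 ler_pdivrMr // ler_pdivlMr ?(mulr_gt0 m0 m0) //.
have Pt := ler_wpM2l (ltW P0) tq.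
have PLbq := ler_wpM2l (mulr_ge0 (ltW P0) Lb0) hl.
have LbsVP := ler_wpM2l (mulr_ge0 Lb0 s0) VP.
have sPV := ler_wpM2l s0 PV.
have PsV := ler_wpM2l (ltW P0) hu.
have Pq := ler_wpM2l (ltW P0) qt.
have LbPt := ler_wpM2l Lb0 hiu.
by apply/andP; split; lra.
Qed.

Lemma to_sph_bilipschitz : exists L, bilipschitz dv ds L (to_sph xi).
Proof.
have m0 := wmin_gt0; have L1 := Lb1.
have M1 : 1 <= wmax by rewrite lerDl divr_ge0 // ?ltW ?dv_xi_gt0; lra.
set L := 4 * wmax + wmin^-1 + 16 * Lb * wmax ^+ 2 + Lb / wmin ^+ 2.
have L0 : 0 <= Lb / wmin ^+ 2 by rewrite divr_ge0 ?exprn_ge0 ?ltW //; lra.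
have L2 : 0 <= 16 * Lb * wmax ^+ 2 by rewrite !mulr_ge0 ?exprn_ge0 //; lra.
have L3 : 0 <= wmin^-1 by rewrite invr_ge0 ltW.
have ds_sym a b : ds a b = ds b a := is_metric_sym (proj1 hs) a b.
have infty y : dv (sval y) xi / L <= ds (Some y) None /\
               ds (Some y) None <= L * dv (sval y) xi.
  apply: (bilipschitz_weaken (A := 4 * wmax) (B := wmin^-1)) => //.
  - by rewrite mulr_gt0 //; lra.
  - by rewrite /L; lra.
  - by rewrite /L; lra.
  - exact/ltW/dv_xi_gt0.
  - by rewrite [wmin^-1 * _]mulrC; apply: sph_infty_comparable.
exists L; split; first by rewrite /L; lra.
move=> a b; have [-> | ha] := pselect (a = xi); have [-> | hb] := pselect (b = xi).
- by rewrite to_sph_self (is_metric_xx mv) (is_metric_xx (proj1 hs)) mul0r mulr0.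
- pose z := exist (fun x => x <> xi) b hb.
  rewrite -[b]/(sval z) to_sph_self to_sph_val (is_metric_sym mv) ds_sym.
  exact: infty.
- pose y := exist (fun x => x <> xi) a ha.
  by rewrite -[a]/(sval y) to_sph_self to_sph_val; exact: infty.
pose y := exist (fun x => x <> xi) a ha; pose z := exist (fun x => x <> xi) b hb.
rewrite -[a]/(sval y) -[b]/(sval z) !to_sph_val.
apply: (bilipschitz_weaken (A := 16 * Lb * wmax ^+ 2) (B := Lb / wmin ^+ 2)).
- by rewrite !mulr_gt0 ?exprn_gt0 //; lra.
- by rewrite /L; lra.
- by rewrite /L; lra.
- exact: is_metric_ge0.
- by rewrite [Lb / _ * _]mulrAC; apply: sph_pair_comparable.
Qed.

End Sphericalization.

Lemma visual_metric_le1 (R : realType) (X : Type) (d : X -> X -> R) (p : X) (eps : R)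
  (dv : bdry d -> bdry d -> R) :
  is_metric d -> 0 < eps -> visual_metric p eps dv -> forall x y, dv x y <= 1.
Proof.
move=> dm e0 [mv hv] x y; have [<- | xy] := pselect (x = y).
  by rewrite (is_metric_xx mv).
have [r [hr /andP[_ ub]]] := visual_bound_fin e0 (is_metric_neq0 mv xy)
  (proj1 (hv x y)) (proj2 (hv x y)).
have r0 : 0 <= r by rewrite -lee_fin -hr; apply: bgprod_ge0.
by apply: le_trans ub _; rewrite expR_le1 oppr_le0 mulr_ge0 // ltW.
Qed.

Theorem proposition5p4 (R : realType) (delta eps0 eps1 : R) :
  0 <= delta -> 0 < eps0 -> 0 < eps1 ->
  exists L : R, 1 <= L /\
  forall (X : Type) (d : X -> X -> R),
    proper_geodesic_hyperbolic d delta ->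
  forall (xi : bdry d) (p : X) (eps : R),
    0 < eps -> eps <= Num.min eps0 eps1 ->
  forall (dv : bdry d -> bdry d -> R)
         (dp : compl_pt xi -> compl_pt xi -> R)
         (di : compl_pt xi -> compl_pt xi -> R),
    visual_metric p eps dv ->
    parabolic_visual_metric xi p eps dp ->
    inversion_metric dv xi di ->
    (* (1) *)
    bilipschitz dp di L id /\
    (* (2) *)
    (~ isolated_pt dv xi ->
     forall (eta : compl_pt xi) (ds : option (compl_pt xi) -> option (compl_pt xi) -> R),
       sphericalization_metric dp eta ds ->
       exists L' : R, bilipschitz dv ds L' (to_sph xi)).
Proof.
move=> d0 e0 _; set L := 8 * expR (eps0 * (16 * delta + 6)).
have L1 : 1 <= L.
  have K0 : 0 <= 16 * delta + 6 by lra.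
  have := expR_ge1Dx (eps0 * (16 * delta + 6)); have := mulr_ge0 (ltW e0) K0.
  by rewrite /L; lra.
exists L; split => // X d [dm [_ [_ dh]]] xi p eps ep epm dv dp di hv hp hi.
have ee0 : eps <= eps0 by move: epm; rewrite le_min => /andP[].
have cmp := parabolic_inversion_comparable dm dh ep ee0 hv hp hi.
split; first by split.
(* Non-isolation of xi only makes the sphericalized space unbounded; the estimates
   below do not need it. *)
move=> _ eta ds hs.
exact: (to_sph_bilipschitz (proj1 hv) (visual_metric_le1 dm ep hv) hi (proj1 hp) L1 cmp hs).
Qed.
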